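(* If the two-player two-action game is symmetric, i.e. its payoff table is: (action 1, action 1) gives $a/a$, (action 1, action 2) gives $b/c$, (action 2, action 1) gives $c/b$, (action 2, action 2) gives $d/d$ (first number the row player's payoff, second the column player's), then the unconstrained SA-IGA self-play dynamics $\dot x=F(x)$ on $x=(p_1,p_2,w_1,w_2)\in\mathbb{R}^4$ is linear, i.e. $F$ is an affine function of $(p_1,p_2,w_1,w_2)$.
   Context: Two players $i\in\{1,2\}$, each with actions $1,2$; $r_i^{jk}$ is the payoff of player $i$ when player $i$ plays action $j$ and its opponent $-i$ plays action $k$ (so for the symmetric game $r_i^{11}=a$, $r_i^{12}=b$, $r_i^{21}=c$, $r_i^{22}=d$ for both $i$). Player $i$'s mixed strategy is given by $p_i\in[0,1]$, its probability of playing action 1. The expected payoff of player $i$ is $V_i(p_1,p_2)=\sum_{j,k}\pi_i(j)\pi_{-i}(k)r_i^{jk}$ with $\pi_i(1)=p_i,\ \pi_i(2)=1-p_i$. The social payoff is $V^{soc}=\frac{1}{2}(V_1+V_2)$. Each player $i$ has a social attitude $w_i\in[0,1]$ and overall payoff $\tilde V_i=(1-w_i)V_i+w_iV^{soc}$. The unconstrained SA-IGA dynamics (both players using SA-IGA) is the system $\dot p_i=\frac{\partial \tilde V_i}{\partial p_i}$ (partial derivative with respect to the player's own $p_i$, all other variables fixed), $\dot w_i=\varepsilon\,(V_i-V^{soc})$, $i\in\{1,2\}$, where $\varepsilon>0$ is a constant. Write this as $\dot x=F(x)$ with $x=(p_1,p_2,w_1,w_2)$. *)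

From Stdlib Require Import Reals.
From Coquelicot Require Import Coquelicot.
Open Scope R_scope.

(* Payoff table: r i j k = payoff of player i (i = 1,2) when it plays
   action j (j = 1,2) and its opponent plays action k (k = 1,2). *)
Definition payoff := nat -> nat -> nat -> R.

Definition pi (p : R) (j : nat) : R := if Nat.eqb j 1 then p else 1 - p.

Definition Vpl (r : payoff) (i : nat) (pown popp : R) : R :=
  pi pown 1 * pi popp 1 * r i 1%nat 1%nat
  + pi pown 1 * pi popp 2 * r i 1%nat 2%nat
  + pi pown 2 * pi popp 1 * r i 2%nat 1%nat
  + pi pown 2 * pi popp 2 * r i 2%nat 2%nat.

Definition V1 (r : payoff) (p1 p2 : R) : R := Vpl r 1 p1 p2.
Definition V2 (r : payoff) (p1 p2 : R) : R := Vpl r 2 p2 p1.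
Definition Vsoc (r : payoff) (p1 p2 : R) : R := (V1 r p1 p2 + V2 r p1 p2) / 2.

Definition tV1 (r : payoff) (p1 p2 w1 : R) : R :=
  (1 - w1) * V1 r p1 p2 + w1 * Vsoc r p1 p2.
Definition tV2 (r : payoff) (p1 p2 w2 : R) : R :=
  (1 - w2) * V2 r p1 p2 + w2 * Vsoc r p1 p2.

Definition F (r : payoff) (eps : R) (k : nat) (p1 p2 w1 w2 : R) : R :=
  match k with
  | 1%nat => Derive (fun q => tV1 r q p2 w1) p1
  | 2%nat => Derive (fun q => tV2 r p1 q w2) p2
  | 3%nat => eps * (V1 r p1 p2 - Vsoc r p1 p2)
  | _ => eps * (V2 r p1 p2 - Vsoc r p1 p2)
  end.

Definition symmetric_game (r : payoff) (a b c d : R) : Prop :=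
  forall i : nat, (i = 1%nat \/ i = 2%nat) ->
    r i 1%nat 1%nat = a /\ r i 1%nat 2%nat = b /\
    r i 2%nat 1%nat = c /\ r i 2%nat 2%nat = d.

(** In a symmetric game both expected payoffs come from one bilinear form
    [u x y = d + (b-d) x + (c-d) y + (a-b-c+d) x y]: [V1 = u p1 p2] and
    [V2 = u p2 p1].  The only possible nonlinear terms of the vector field
    are multiples of the [x y] coefficient of [u], and they cancel: in
    [V1 - Vsoc = (u p1 p2 - u p2 p1) / 2] the [p1 p2] terms cancel, and the
    coefficient of [w1] in [d tV1 / d p1] is
    [((d/dp1) u p2 p1 - (d/dp1) u p1 p2) / 2 = (c - b) / 2], where the
    [p2]-dependence cancels.  Exchanging the players maps the components
    for player 2 onto those for player 1. *)

From Stdlib Require Import Reals Lia.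
From Coquelicot Require Import Coquelicot.
Open Scope R_scope.

Definition sym_payoff (a b c d x y : R) : R :=
  d + (b - d) * x + (c - d) * y + (a - b - c + d) * x * y.

Definition sa_iga_offset (b d : R) (k : nat) : R :=
  match k with 1%nat | 2%nat => b - d | _ => 0 end.

Definition sa_iga_matrix (a b c d eps : R) (k j : nat) : R :=
  match k, j with
  | 1%nat, 2%nat | 2%nat, 1%nat => a - b - c + d
  | 1%nat, 3%nat | 2%nat, 4%nat => (c - b) / 2
  | 3%nat, 1%nat | 4%nat, 2%nat => eps * (b - c) / 2
  | 3%nat, 2%nat | 4%nat, 1%nat => - (eps * (b - c) / 2)
  | _, _ => 0
  end.

Section SymmetricGame.

Variables (r : payoff) (a b c d : R).
Hypothesis r_sym : symmetric_game r a b c d.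

Lemma Vpl_symmetric_game (i : nat) (x y : R) :
  (i = 1%nat \/ i = 2%nat) -> Vpl r i x y = sym_payoff a b c d x y.
Proof.
  intros Hi; destruct (r_sym i Hi) as (Ha & Hb & Hc & Hd).
  unfold Vpl, pi, sym_payoff; simpl; rewrite Ha, Hb, Hc, Hd; ring.
Qed.

Lemma V1_symmetric_game (p1 p2 : R) : V1 r p1 p2 = sym_payoff a b c d p1 p2.
Proof. apply Vpl_symmetric_game; left; reflexivity. Qed.

Lemma V2_symmetric_game (p1 p2 : R) : V2 r p1 p2 = sym_payoff a b c d p2 p1.
Proof. apply Vpl_symmetric_game; right; reflexivity. Qed.

Lemma V2_swap (p1 p2 : R) : V2 r p1 p2 = V1 r p2 p1.
Proof. now rewrite V1_symmetric_game, V2_symmetric_game. Qed.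

Lemma Vsoc_swap (p1 p2 : R) : Vsoc r p1 p2 = Vsoc r p2 p1.
Proof. unfold Vsoc; rewrite !V2_swap; field. Qed.

Lemma tV2_swap (p1 p2 w : R) : tV2 r p1 p2 w = tV1 r p2 p1 w.
Proof. unfold tV1, tV2; now rewrite V2_swap, Vsoc_swap. Qed.

Lemma F2_swap (eps p1 p2 w1 w2 : R) :
  F r eps 2 p1 p2 w1 w2 = F r eps 1 p2 p1 w2 w1.
Proof. simpl; apply Derive_ext; intros q; apply tV2_swap. Qed.

Lemma F4_swap (eps p1 p2 w1 w2 : R) :
  F r eps 4 p1 p2 w1 w2 = F r eps 3 p2 p1 w2 w1.
Proof. simpl; now rewrite V2_swap, Vsoc_swap. Qed.

Lemma tV1_symmetric_game (p1 p2 w1 : R) :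
  tV1 r p1 p2 w1
  = (1 - w1 / 2) * sym_payoff a b c d p1 p2 + w1 / 2 * sym_payoff a b c d p2 p1.
Proof.
  unfold tV1, Vsoc; rewrite V1_symmetric_game, V2_symmetric_game; field.
Qed.

Lemma F1_symmetric_game (eps p1 p2 w1 w2 : R) :
  F r eps 1 p1 p2 w1 w2 = (b - d) + (a - b - c + d) * p2 + (c - b) / 2 * w1.
Proof.
  simpl; rewrite (Derive_ext _ _ _ (fun q => tV1_symmetric_game q p2 w1)).
  apply is_derive_unique; unfold sym_payoff; auto_derive; [exact I | field].
Qed.

Lemma F3_symmetric_game (eps p1 p2 w1 w2 : R) :
  F r eps 3 p1 p2 w1 w2 = eps * (b - c) / 2 * (p1 - p2).
Proof.
  simpl; unfold Vsoc; rewrite V1_symmetric_game, V2_symmetric_game.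
  unfold sym_payoff; field.
Qed.

End SymmetricGame.

Theorem theorem2 (r : payoff) (a b c d eps : R) :
  0 < eps -> symmetric_game r a b c d ->
  exists (A : nat -> nat -> R) (c0 : nat -> R),
    forall (k : nat) (p1 p2 w1 w2 : R), (1 <= k <= 4)%nat ->
      F r eps k p1 p2 w1 w2
      = c0 k + A k 1%nat * p1 + A k 2%nat * p2 + A k 3%nat * w1 + A k 4%nat * w2.
Proof.
  intros _ Hsym.
  exists (sa_iga_matrix a b c d eps), (sa_iga_offset b d).
  intros k p1 p2 w1 w2 Hk.
  destruct k as [|[|[|[|[|k]]]]]; try lia; simpl sa_iga_matrix; simpl sa_iga_offset.
  - rewrite (F1_symmetric_game _ _ _ _ _ Hsym); ring.
  - rewrite (F2_swap _ _ _ _ _ Hsym), (F1_symmetric_game _ _ _ _ _ Hsym); ring.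
  - rewrite (F3_symmetric_game _ _ _ _ _ Hsym); ring.
  - rewrite (F4_swap _ _ _ _ _ Hsym), (F3_symmetric_game _ _ _ _ _ Hsym); ring.
Qed.
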